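(* Let $A=\langle Q,F,\delta,\gamma\rangle$ be a well-structured pomset automaton and let $q\in Q$ be a fork target, i.e. there exist $p\in Q$ and $\phi\in\mathbb{M}(Q)$ with $q\in\phi$ and $\gamma(p,\phi)\neq\emptyset$. Then every pomset in $L_A(q)$ is a parallel prime.
   Context: Fix a finite alphabet $\Sigma$. Pomsets are isomorphism classes of finite labelled posets over $\Sigma$; $1$ is the empty pomset; sequential composition $U\cdot V$ is the disjoint union with every element of $U$ below every element of $V$; parallel composition $U\parallel V$ is the disjoint union of the orders. $\mathsf{SP}(\Sigma)$ is the smallest set containing $1$ and the one-element pomsets, closed under $\cdot,\parallel$. A pomset $U$ is a parallel prime if it is non-empty and whenever $U=V\parallel W$ we have $V=1$ or $W=1$. A pomset automaton is $A=\langle Q,F,\delta,\gamma\rangle$ with $F\subseteq Q$, $\delta:Q\times\Sigma\to2^Q$, $\gamma:Q\times\mathbb{M}(Q)\to2^Q$ ($\mathbb{M}(Q)$ finite multisets over $Q$), each $q$ having finitely many $\phi$ with $\gamma(q,\phi)\ne\emptyset$. The run relation $\to_A$ is the smallest relation with: $q\xrightarrow{1}_A q$; $q\xrightarrow{a}_A q'$ if $q'\in\delta(q,a)$; $q\xrightarrow{U\cdot V}_A q'$ if $q\xrightarrow{U}_A q''\xrightarrow{V}_A q'$; $q\xrightarrow{U_1\parallel\cdots\parallel U_n}_A q'$ if $q'\in\gamma(q,\{\!|q_1,\dots,q_n|\!\})$ and each $q_i\xrightarrow{U_i}_A q_i'$ for some $q_i'\in F$. $L_A(q)=\{U\in\mathsf{SP}(\Sigma)\mid\exists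 q'\in F.\ q\xrightarrow{U}_A q'\}$. $A$ is well-structured if for all $q,q'$, $\phi$ with $q'\in\phi$ and $\gamma(q,\phi)\ne\emptyset$: $|\phi|\ge2$, $q'\notin F$, and $\gamma(q',\phi')\cap F=\emptyset$ for every $\phi'$. *)

From mathcomp Require Import all_boot.
From mathcomp Require Import finmap multiset.
From Stdlib Require Import List.
Set Implicit Arguments.
Unset Strict Implicit.
Unset Printing Implicit Defensive.
Local Open Scope mset_scope.

(** A pomset is an isomorphism class of finite labelled posets.  We work with
    concrete representatives (carrier ['I_n]) and define every notion below
    (compositions, SP, runs, primality) invariantly under isomorphism: e.g.
    [is_par U V W] says that U is isomorphic to the parallel composition of
    V and W. *)
Record lposet (S : Type) := LPoset {
  lp_size : nat;
  lp_lab : 'I_lp_size -> S;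
  lp_le : rel 'I_lp_size;
  lp_refl : reflexive lp_le;
  lp_anti : antisymmetric lp_le;
  lp_trans : transitive lp_le
}.
Arguments lp_size {S}.
Arguments lp_lab {S}.
Arguments lp_le {S}.

Section Pomsets.
Variable S : Type.
Implicit Types U V W : lposet S.

Definition is_empty U : Prop := lp_size U = 0.

Definition is_atom U (a : S) : Prop :=
  lp_size U = 1 /\ forall x, lp_lab U x = a.

Definition is_par U V W : Prop :=
  exists f : 'I_(lp_size U) -> 'I_(lp_size V) + 'I_(lp_size W),
    bijective f /\
    (forall x, lp_lab U x = match f x with inl a => lp_lab V a
                                        | inr b => lp_lab W b end) /\
    (forall x y, lp_le U x y =
       match f x, f y with
       | inl a, inl b => lp_le V a b
       | inr a, inr b => lp_le W a b
       | _, _ => false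
       end).

Definition is_seq U V W : Prop :=
  exists f : 'I_(lp_size U) -> 'I_(lp_size V) + 'I_(lp_size W),
    bijective f /\
    (forall x, lp_lab U x = match f x with inl a => lp_lab V a
                                        | inr b => lp_lab W b end) /\
    (forall x y, lp_le U x y =
       match f x, f y with
       | inl a, inl b => lp_le V a b
       | inr a, inr b => lp_le W a b
       | inl _, inr _ => true
       | inr _, inl _ => false
       end).

Fixpoint is_parn U (Us : list (lposet S)) : Prop :=
  match Us with
  | nil => is_empty U
  | V :: Vs => exists W, is_par U V W /\ is_parn W Vs
  end.

Inductive sp : lposet S -> Prop :=
| sp_empty U : is_empty U -> sp U
| sp_atom U a : is_atom U a -> sp U
| sp_seq U V W : is_seq U V W -> sp V -> sp W -> sp U
| sp_par U V W : is_par U V W -> sp V -> sp W -> sp U.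

Definition parallel_prime U : Prop :=
  0 < lp_size U /\
  forall V W, is_par U V W -> is_empty V \/ is_empty W.

End Pomsets.

Record pa (S : Type) (Q : choiceType) := PA {
  pa_F : Q -> Prop;
  pa_delta : Q -> S -> Q -> Prop;
  pa_gamma : Q -> {mset Q} -> Q -> Prop;
  pa_gamma_fin : forall q, exists s : list {mset Q},
      forall phi, (exists q', pa_gamma q phi q') -> List.In phi s
}.

Section Runs.
Variables (S : Type) (Q : choiceType) (A : pa S Q).

Inductive run : Q -> lposet S -> Q -> Prop :=
| run_unit q U : is_empty U -> run q U q
| run_atom q a q' U : pa_delta A q a q' -> is_atom U a -> run q U q'
| run_seq q q'' q' U V W :
    is_seq U V W -> run q V q'' -> run q'' W q' -> run q U q'
| run_par q q' U (l : list (Q * lposet S)) :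
    (0 < size l)%N ->
    pa_gamma A q (seq_mset (map fst l)) q' ->
    is_parn U (map snd l) ->
    (forall p, List.In p l -> exists qf, pa_F A qf /\ run p.1 p.2 qf) ->
    run q U q'.

Definition lang (q : Q) (U : lposet S) : Prop :=
  sp U /\ exists q', pa_F A q' /\ run q U q'.

Definition well_structured : Prop :=
  forall (q q' : Q) (phi : {mset Q}),
    q' \in phi -> (exists r, pa_gamma A q phi r) ->
    [/\ (2 <= size phi)%N, ~ pa_F A q' &
        forall phi' r, pa_gamma A q' phi' r -> ~ pa_F A r].

Definition fork_target (q : Q) : Prop :=
  exists (p : Q) (phi : {mset Q}), q \in phi /\ exists r, pa_gamma A p phi r.

End Runs.

(** A fork target [q] of a well-structured automaton is not accepting, and no
    fork from [q] leads to an accepting state.  Hence an accepting run from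
    [q] cannot be a fork at top level, and an empty run cannot fork at all
    (the first thread would be an empty run from a non-accepting fork target
    to an accepting state), so empty runs stay put.  Inducting on the run:
    an atom is prime, a sequential composition of two non-empty pomsets is
    connected and therefore prime, and a sequential composition with an empty
    factor is isomorphic to its other factor, whose run again starts at [q]
    or ends in the accepting final state. *)

From mathcomp Require Import all_boot.
From mathcomp Require Import finmap multiset.
From Stdlib Require Import List.

Set Implicit Arguments.
Unset Strict Implicit.
Unset Printing Implicit Defensive.

Lemma bij_ord_sum_size n a b (f : 'I_n -> 'I_a + 'I_b) :
  bijective f -> n = a + b.
Proof. by move/bij_eq_card; rewrite card_sum !card_ord. Qed.

Section ParallelPrimes.
Variable S : Type.
Implicit Types U V W : lposet S.

Lemma is_par_size U V W : is_par U V W -> lp_size U = lp_size V + lp_size W.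
Proof. by case=> f [fb _]; apply: bij_ord_sum_size fb. Qed.

Lemma is_seq_size U V W : is_seq U V W -> lp_size U = lp_size V + lp_size W.
Proof. by case=> f [fb _]; apply: bij_ord_sum_size fb. Qed.

Lemma parallel_prime_iso U W (j : 'I_(lp_size W) -> 'I_(lp_size U)) :
  injective j -> lp_size U = lp_size W ->
  (forall w, lp_lab W w = lp_lab U (j w)) ->
  (forall a b, lp_le W a b = lp_le U (j a) (j b)) ->
  parallel_prime W -> parallel_prime U.
Proof.
move=> j_inj eqUW labj lej [W_gt0 W_prime]; split; first by rewrite eqUW.
move=> X Y [g [g_bij [labg leg]]]; apply: W_prime.
exists (g \o j); split; last by split=> [x|x y] /=; rewrite ?labj ?labg ?lej ?leg.
apply: bij_comp g_bij _; apply: inj_card_bij j_inj _.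
by rewrite !card_ord eqUW.
Qed.

Lemma parallel_prime_atom U a : is_atom U a -> parallel_prime U.
Proof.
case=> U1 _; split; first by rewrite U1.
move=> X Y /is_par_size; rewrite U1 /is_empty.
case: (lp_size X) => [|[|n]] //=; first by left.
by case: (lp_size Y) => //; right.
Qed.

Lemma parallel_prime_seq_nonempty U V W :
  is_seq U V W -> 0 < lp_size V -> 0 < lp_size W -> parallel_prime U.
Proof.
case=> f [[finv fK finvK] [_ lef]] V_gt0 W_gt0.
split; first by rewrite (bij_ord_sum_size (Bijective fK finvK)) addn_gt0 V_gt0.
move=> X Y [g [[ginv gK ginvK] [_ leg]]].
pose side z := if g z is inl _ then true else false.
have side_le x y : lp_le U x y -> side x = side y.
  by rewrite leg /side; case: (g x); case: (g y).
pose v0 := finv (inl (Ordinal V_gt0)); pose w0 := finv (inr (Ordinal W_gt0)).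
have side_v0w0 : side v0 = side w0 by apply: side_le; rewrite lef !finvK.
(* every element lies above [v0] or below [w0] *)
have side_const z : side z = side v0.
  case fz: (f z) => [a|b].
    by rewrite side_v0w0; apply: side_le; rewrite lef fz finvK.
  by apply/esym/side_le; rewrite lef fz finvK.
rewrite /is_empty; case side_v0: (side v0); [right | left].
  case: (posnP (lp_size Y)) => // Y_gt0.
  by have := side_const (ginv (inr (Ordinal Y_gt0))); rewrite side_v0 /side ginvK.
case: (posnP (lp_size X)) => // X_gt0.
by have := side_const (ginv (inl (Ordinal X_gt0))); rewrite side_v0 /side ginvK.
Qed.

Lemma parallel_prime_seq_emptyl U V W :
  is_seq U V W -> is_empty V -> parallel_prime W -> parallel_prime U.
Proof.
case=> f [[finv fK finvK] [labf lef]] V0.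
apply: (parallel_prime_iso (j := fun w => finv (inr w))).
- by move=> a b /(congr1 f); rewrite !finvK => -[].
- by rewrite (bij_ord_sum_size (Bijective fK finvK)) V0.
- by move=> w; rewrite labf finvK.
- by move=> a b; rewrite lef !finvK.
Qed.

Lemma parallel_prime_seq_emptyr U V W :
  is_seq U V W -> is_empty W -> parallel_prime V -> parallel_prime U.
Proof.
case=> f [[finv fK finvK] [labf lef]] W0.
apply: (parallel_prime_iso (j := fun v => finv (inl v))).
- by move=> a b /(congr1 f); rewrite !finvK => -[].
- by rewrite (bij_ord_sum_size (Bijective fK finvK)) W0 addn0.
- by move=> v; rewrite labf finvK.
- by move=> a b; rewrite lef !finvK.
Qed.

Lemma parallel_prime_seq U V W :
  is_seq U V W ->
  (is_empty V -> parallel_prime W) -> (is_empty W -> parallel_prime V) ->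
  parallel_prime U.
Proof.
move=> UVW W_prime V_prime.
case: (posnP (lp_size V)) => [V0 | V_gt0].
  exact: parallel_prime_seq_emptyl UVW V0 (W_prime V0).
case: (posnP (lp_size W)) => [W0 | W_gt0].
  exact: parallel_prime_seq_emptyr UVW W0 (V_prime W0).
exact: parallel_prime_seq_nonempty UVW V_gt0 W_gt0.
Qed.

End ParallelPrimes.

Section WellStructuredRuns.
Variables (S : Type) (Q : choiceType) (A : pa S Q).
Hypothesis A_ws : well_structured A.

Lemma run_empty_eq q U q' : run A q U q' -> is_empty U -> q = q'.
Proof.
(* [fix] rather than [elim]: the threads of a fork are nested under [List.In] *)
move: q U q'; fix IH 4 => q U q' qUq'; rewrite /is_empty; case: qUq'.
- by [].
- by move=> {}q a {}q' {}U _ [U1 _]; rewrite U1.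
- move=> {}q q'' {}q' {}U V W /is_seq_size -> qVq'' q''Wq' /eqP.
  by rewrite addn_eq0 => /andP[/eqP/(IH _ _ _ qVq'') -> /eqP/(IH _ _ _ q''Wq')].
- move=> {}q {}q' {}U [|t l] // _ fork [W [/is_par_size -> _]] threads /eqP.
  rewrite addn_eq0 => /andP[/eqP t0 _]; exfalso.
  case: (threads t (in_eq t l)) => qf [F_qf tqf].
  have t_in : t.1 \in seq_mset (map fst (t :: l)).
    by rewrite (perm_mem (perm_eq_seq_mset _)) mem_head.
  have [_ nF_t _] := A_ws t_in (ex_intro _ q' fork).
  by apply: nF_t; rewrite (IH _ _ _ tqf t0).
Qed.

Lemma run_parallel_prime q U q' :
  run A q U q' ->
  ~ pa_F A q -> (forall phi r, pa_gamma A q phi r -> ~ pa_F A r) ->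
  pa_F A q' -> parallel_prime U.
Proof.
elim=> {q U q'}.
- by move=> q U _ nF_q _ F_q.
- move=> q a q' U _ U_atom _ _ _; exact: parallel_prime_atom U_atom.
- move=> q q'' q' U V W UVW qVq'' IHV q''Wq' IHW nF_q nF_fork F_q'.
  apply: (parallel_prime_seq UVW) => [V0 | W0].
    by move: IHW; rewrite -(run_empty_eq qVq'' V0); apply.
  by move: IHV; rewrite (run_empty_eq q''Wq' W0); apply.
- by move=> q q' U l _ fork _ _ _ nF_fork F_q'; case: (nF_fork _ _ fork).
Qed.

End WellStructuredRuns.

Theorem lemma5p6 (S : finType) (Q : choiceType) (A : pa S Q) :
  well_structured A ->
  forall q : Q, fork_target A q ->
  forall U : lposet S, lang A q U -> parallel_prime U.
Proof.
move=> A_ws q [p [phi [q_in fork]]] U [_ [q' [F_q' qUq']]].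
have [_ nF_q nF_fork] := A_ws _ _ _ q_in fork.
exact: (run_parallel_prime A_ws qUq' nF_q nF_fork F_q').
Qed.
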